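(* Let $A \in \mathbb{R}^{n\times n}$ be symmetric positive definite with smallest eigenvalue $\alpha>0$ and largest eigenvalue $\beta$. Let $\xi \ge 0$, $\eta = \frac{1}{1+\xi}$, and $\zeta = \frac{2\eta}{\alpha+\beta}$. Let $f(t) = 2t - t^2$ and $P_1 = 2\zeta I - \zeta^2 A$. Set $\hat\alpha_\eta = \frac{2\eta\alpha}{\alpha+\beta}$ and $\hat\beta_\eta = \frac{2\eta\beta}{\alpha+\beta}$, and assume $\hat \alpha_\eta + 2(1 - \eta) < 1$. Denote by $$\hat \alpha_\eta = \lambda_1^{(0)} \le \lambda_2^{(0)} \le \ldots \le \lambda_n^{(0)} = \hat \beta_\eta$$ the eigenvalues of the scaled matrix $\zeta A$, and by $$\lambda_1^{(1)} \le \lambda_2^{(1)} \le \ldots \le \lambda_n^{(1)}$$ the eigenvalues of $P_1 A$ (counted with multiplicity). Let $k$ be the integer satisfying $\lambda_k^{(0)} \le \hat \alpha_\eta + 2(1 - \eta) \le \lambda_{k+1}^{(0)}$. Then $$\lambda_j^{(1)} = f(\lambda_j^{(0)}), \qquad j = 1, \ldots, k.$$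
   Context: Note that $P_1 A = 2\zeta A - \zeta^2 A^2 = f(\zeta A)$, i.e. $P_1$ is the first step of the scaled Newton (Hotelling) iteration for $A^{-1}$ started from $P_0 = I$, with the scaling $\zeta = 2/((\alpha+\beta)(1+\xi))$ obtained by enlarging the usual parameter $\theta = (\alpha+\beta)/2$ to $\bar\theta = \theta(1+\xi)$. *)

From HB Require Import structures.
From mathcomp Require Import all_boot all_order all_algebra.
Set Implicit Arguments. Unset Strict Implicit. Unset Printing Implicit Defensive.
Import Order.TTheory GRing.Theory Num.Theory.
Local Open Scope ring_scope.

Definition fN (R : ringType) (t : R) : R := 2 * t - t ^+ 2.

Definition P1 (R : comRingType) (n : nat) (zeta : R) (A : 'M[R]_n) : 'M[R]_n :=
  (2 * zeta)%:M - zeta ^+ 2 *: A.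

Definition sorted_eigenvalues (R : numDomainType) (n : nat) (M : 'M[R]_n)
    (lam : 'I_n -> R) : Prop :=
  char_poly M = \prod_(i < n) ('X - (lam i)%:P) /\
  (forall i j : 'I_n, (i <= j)%N -> lam i <= lam j).

From mathcomp Require Import all_boot all_order all_algebra.
From mathcomp Require Import reals.
From mathcomp Require Import ring lra.
Set Implicit Arguments. Unset Strict Implicit.
Import Order.TTheory GRing.Theory Num.Theory.
Local Open Scope ring_scope.

(* Since P_1 A = 2 (zeta A) - (zeta A)^2 = f(zeta A), the characteristic
   polynomial of P_1 A factors over the values f(lambda_i^(0)): the
   eigenvalues of P_1 A are these values, sorted.  As
   f(u) - f(t) = (u - t)(2 - t - u), we have f(t) <= f(u) whenever t <= u and
   t + u <= 2.  With c = alpha_hat + 2(1 - eta), every lambda^(0) is at most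
   beta_hat = 2 - c while lambda_i^(0) <= c for i <= k, so
   f(lambda_i^(0)) <= f(lambda_j^(0)) for all i <= j with i <= k: the first k
   values are already the k smallest, in order, and sorting leaves them in
   place. *)

Section OrderedSeq.
Variables (d : Order.disp_t) (T : orderType d).

Lemma nth_codom_ord n (g : 'I_n -> T) x0 (i : 'I_n) : nth x0 (codom g) i = g i.
Proof. by rewrite codomE (nth_map i) ?size_enum_ord // nth_ord_enum. Qed.

Lemma sorted_codom n (g : 'I_n -> T) :
  (forall i j : 'I_n, (i <= j)%N -> (g i <= g j)%O) -> sorted <=%O (codom g).
Proof.
move=> le_g; rewrite codomE; apply: (homo_sorted (e := relpre val leq)) => //.
by rewrite -sorted_map val_enum_ord iota_sorted.
Qed.

Lemma sort_cat_sorted (a b : seq T) :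
  sorted <=%O a -> allrel <=%O a b -> sort <=%O (a ++ b) = a ++ sort <=%O b.
Proof.
move=> sa ab; have sb : sorted <=%O (sort <=%O b) by apply: sort_sorted; exact: le_total.
apply: (sorted_eq le_trans le_anti); first by apply: sort_sorted; exact: le_total.
  rewrite sorted_pairwise ?pairwise_cat; last exact: le_trans.
  rewrite (@eq_allrel_memr _ _ _ a _ b (mem_sort _ b)) ab.
  by rewrite -!sorted_pairwise; [rewrite sa sb | exact: le_trans..].
by rewrite perm_sort perm_sym perm_cat2l perm_sort.
Qed.

Lemma take_sort (s : seq T) k x0 : (k <= size s)%N ->
  (forall i j, (i <= j < size s)%N -> (i < k)%N -> (nth x0 s i <= nth x0 s j)%O) ->
  take k (sort <=%O s) = take k s.
Proof.
move=> ks le_s; have size_k := size_takel ks.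
rewrite -[in LHS](cat_take_drop k s) sort_cat_sorted ?take_size_cat //.
  apply/(sortedP x0) => i; rewrite size_k => ik; have i_lt_k := ltnW ik.
  rewrite !nth_take //; apply: (le_s _ _ _ i_lt_k).
  by rewrite leqnSn (leq_trans ik ks).
apply/allrelP => x y /(nthP x0)[i]; rewrite size_k => ik <-.
move=> /(nthP x0)[j]; rewrite size_drop => jk <-.
rewrite nth_take // nth_drop; apply: le_s => //.
by rewrite -ltn_subRL jk andbT (leq_trans (ltnW ik) (leq_addr _ _)).
Qed.

Lemma take_sort_codom n (g : 'I_n -> T) k : (k <= n)%N ->
  (forall i j : 'I_n, (i <= j)%N -> (i < k)%N -> (g i <= g j)%O) ->
  take k (sort <=%O (codom g)) = take k (codom g).
Proof.
case: n g => [g|n g] kn le_g; first by rewrite leqn0 in kn; rewrite (eqP kn) !take0.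
apply: (take_sort (x0 := g ord0)); rewrite size_codom card_ord // => i j /andP[ij jn] ik.
have in_ : (i < n.+1)%N := leq_ltn_trans ij jn.
by rewrite -[i]/(val (Ordinal in_)) -[j]/(val (Ordinal jn)) !nth_codom_ord le_g.
Qed.

End OrderedSeq.

Lemma horner_char_poly (R : comNzRingType) n (M : 'M[R]_n) y :
  (char_poly M).[y] = \det (y%:M - M).
Proof.
rewrite /char_poly -horner_evalE -det_map_mx; congr (\det _).
apply/matrixP => i j; rewrite !mxE /=.
by case: (i == j); rewrite /horner_eval /= ?mulr1n ?mulr0n !hornerE.
Qed.

Lemma eq_poly_horner_inj (R : idomainType) (g : nat -> R) (p q : {poly R}) :
  injective g -> (forall i, p.[g i] = q.[g i]) -> p = q.
Proof.
move=> inj_g pq; apply/eqP; rewrite -subr_eq0; apply/eqP.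
apply: (@roots_geq_poly_eq0 _ _ (map g (iota 0 (size (p - q))))).
- by apply/allP => x /mapP [i _ ->]; rewrite /root hornerD hornerN pq subrr.
- by rewrite map_inj_uniq ?iota_uniq.
- by rewrite size_map size_iota.
Qed.

Section CharPoly.
Variables (R : numFieldType) (n : nat) (M : 'M[R]_n) (l : 'I_n -> R).
Hypothesis char_M : char_poly M = \prod_(i < n) ('X - (l i)%:P).

Lemma char_poly_scale c : c != 0 ->
  char_poly (c *: M) = \prod_(i < n) ('X - (c * l i)%:P).
Proof.
move=> c0; apply: (@eq_poly_horner_inj _ (fun i => i%:R)) => [i j /eqP|i].
  by rewrite eqr_nat => /eqP.
rewrite /= horner_char_poly.
have -> : i%:R%:M - c *: M = c *: ((i%:R / c)%:M - M).
  by rewrite scalerBr scale_scalar_mx mulrCA mulfV // mulr1.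
rewrite detZ -horner_char_poly char_M !horner_prod.
rewrite -[in c ^+ n](card_ord n) -prodr_const -big_split /=.
by apply: eq_bigr => j _; rewrite !hornerE mulrBr mulrCA mulfV ?mulr1.
Qed.

Lemma char_poly_fN : char_poly (2 *: M - M *m M) = \prod_(i < n) ('X - (fN (l i))%:P).
Proof.
apply: (@eq_poly_horner_inj _ (fun i => 1 - i%:R ^+ 2)) => [i j /eqP|i].
  rewrite -subr_eq0 opprB addrC subrKA subr_eq0 -!natrX eqr_nat.
  by rewrite eqn_exp2r // => /eqP.
rewrite /= horner_char_poly; set t : R := i%:R.
have -> : (1 - t ^+ 2)%:M - (2 *: M - M *m M) = ((1 + t)%:M - M) *m ((1 - t)%:M - M).
  have -> : 2 *: M = (1 + t) *: M + (1 - t) *: M by rewrite -scalerDl; congr (_ *: _); ring.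
  have -> : 1 - t ^+ 2 = (1 + t) * (1 - t) by ring.
  rewrite mulmxBl !mulmxBr -scalar_mxM mul_scalar_mx mul_mx_scalar.
  by rewrite -[_ + _ - _]addrA opprD addrA.
rewrite det_mulmx -!horner_char_poly char_M !horner_prod -big_split /=.
by apply: eq_bigr => j _; rewrite !hornerE /fN; ring.
Qed.

End CharPoly.

Lemma fN_le (R : realDomainType) (t u : R) : t <= u -> t + u <= 2 -> fN t <= fN u.
Proof.
move=> tu tu2; rewrite /fN -subr_ge0.
have -> : 2 * u - u ^+ 2 - (2 * t - t ^+ 2) = (u - t) * (2 - u - t) by ring.
by apply: mulr_ge0; lra.
Qed.

Section SortedEigenvalues.
Variables (R : realFieldType) (n : nat) (M : 'M[R]_n).

Lemma sorted_eigenvalues_sort (l g : 'I_n -> R) :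
  sorted_eigenvalues M l -> char_poly M = \prod_(i < n) ('X - (g i)%:P) ->
  codom l = sort <=%R (codom g).
Proof.
move=> [char_l le_l] char_g; apply: (sorted_eq le_trans le_anti).
- exact: sorted_codom.
- by apply: sort_sorted; exact: le_total.
have prod_codom h : \prod_(x <- codom h) ('X - x%:P) = \prod_(i < n) ('X - (h i)%:P).
  by rewrite codomE big_map enumT.
by rewrite perm_sym perm_sort; apply: prod_XsubC_eq; rewrite !prod_codom -char_g -char_l.
Qed.

Lemma sorted_eigenvalues_unique (l1 l2 : 'I_n -> R) :
  sorted_eigenvalues M l1 -> sorted_eigenvalues M l2 -> l1 =1 l2.
Proof.
move=> eig1 [char2 le2] i.
rewrite -(nth_codom_ord l1 0) -(nth_codom_ord l2 0) (sorted_eigenvalues_sort eig1 char2).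
by rewrite sorted_sort //; [exact: le_trans | exact: sorted_codom].
Qed.

Lemma sorted_eigenvalues_scale (l : 'I_n -> R) c : 0 < c ->
  sorted_eigenvalues M l -> sorted_eigenvalues (c *: M) (fun i => c * l i).
Proof.
move=> c_gt0 [char_l le_l]; split; first exact (char_poly_scale char_l (lt0r_neq0 c_gt0)).
by move=> i j ij; rewrite ler_pM2l ?le_l.
Qed.

End SortedEigenvalues.

Lemma sorted_eigenvalues_fN_prefix (R : realFieldType) n (M : 'M[R]_n)
    (l0 l1 : 'I_n -> R) k c :
  sorted_eigenvalues M l0 -> sorted_eigenvalues (2 *: M - M *m M) l1 -> (k <= n)%N ->
  (forall i : 'I_n, (i < k)%N -> l0 i <= c) -> (forall i, l0 i <= 2 - c) ->
  forall j : 'I_n, (j < k)%N -> l1 j = fN (l0 j).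
Proof.
move=> eig0 eig1 kn le_c le_2c j jk.
have l1E := sorted_eigenvalues_sort eig1 (char_poly_fN eig0.1).
have prefixE : take k (sort <=%R (codom (fun i => fN (l0 i)))) =
               take k (codom (fun i => fN (l0 i))).
  refine (take_sort_codom kn _) => i i' ii' ik; apply: fN_le; first by case: eig0 => _ ->.
  by apply: le_trans (lerD (le_c i ik) (le_2c i')) _; rewrite addrC subrK.
by rewrite -(nth_codom_ord l1 0) -(nth_take 0 jk) l1E prefixE nth_take // nth_codom_ord.
Qed.

Lemma P1_mulmxE (R : comNzRingType) n (zeta : R) (A : 'M[R]_n) :
  P1 zeta A *m A = 2 *: (zeta *: A) - (zeta *: A) *m (zeta *: A).
Proof.
rewrite /P1 mulmxBl mul_scalar_mx -scalemxAl -scalemxAr -scalemxAl !scalerA.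
by rewrite mulrC expr2.
Qed.

Theorem theorem2p3 (R : realType) (n : nat) (A : 'M[R]_n.+1)
  (mu lam0 lam1 : 'I_n.+1 -> R) (xi : R) (k : nat) :
  A^T = A ->
  (forall v : 'cV[R]_n.+1, v != 0 -> 0 < (v^T *m A *m v) ord0 ord0) ->
  sorted_eigenvalues A mu ->
  let alpha := mu ord0 in
  let beta := mu ord_max in
  0 < alpha ->
  0 <= xi ->
  let eta := 1 / (1 + xi) in
  let zeta := 2 * eta / (alpha + beta) in
  let alpha_hat := 2 * eta * alpha / (alpha + beta) in
  alpha_hat + 2 * (1 - eta) < 1 ->
  sorted_eigenvalues (zeta *: A) lam0 ->
  sorted_eigenvalues (P1 zeta A *m A) lam1 ->
  (1 <= k <= n.+1)%N ->
  lam0 (inord k.-1) <= alpha_hat + 2 * (1 - eta) ->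
  ((k < n.+1)%N -> alpha_hat + 2 * (1 - eta) <= lam0 (inord k)) ->
  forall j : 'I_n.+1, (j < k)%N -> lam1 j = fN (lam0 j).
Proof.
move=> _ _ eigA alpha beta alpha_gt0 xi_ge0 eta zeta alpha_hat _ eig0 eig1.
move=> /andP[k_gt0 k_le] lam0_k _; set c := alpha_hat + 2 * (1 - eta) in lam0_k *.
have le_mu : forall i j : 'I_n.+1, (i <= j)%N -> mu i <= mu j by case: eigA.
have le_alpha_beta : alpha <= beta by apply: le_mu.
have ab_gt0 : 0 < alpha + beta by lra.
have xi1_gt0 : 0 < 1 + xi by lra.
have zeta_gt0 : 0 < zeta := divr_gt0 (mulr_gt0 (ltr0Sn _ 1) (divr_gt0 ltr01 xi1_gt0)) ab_gt0.
have lam0E := sorted_eigenvalues_unique eig0 (sorted_eigenvalues_scale zeta_gt0 eigA).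
rewrite P1_mulmxE in eig1; apply: (sorted_eigenvalues_fN_prefix eig0 eig1 k_le).
  move=> i ik; apply: le_trans lam0_k; case: eig0 => _ -> //.
  by rewrite inordK -ltnS prednK.
have -> : 2 - c = zeta * beta by rewrite /c /alpha_hat /zeta; field; rewrite gt_eqF.
by move=> i; rewrite lam0E ler_pM2l ?le_mu // -ltnS.
Qed.
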